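(* Let $k\ge 2$ and let $\mathcal{U}_k$ be the graph with vertex set $\{v_1,\ldots,v_{3k-2}\}$ in which, for $i\ne j$, $v_i$ and $v_j$ are adjacent if and only if (up to swapping $i$ and $j$) one of the following holds: (1) $1\le i,j\le k$; (2) $1\le i\le k$ and $k+1\le j\le 2k-1$; (3) $k+1\le i\le 2k-1$ and $2k\le j\le 3k-2$; (4) $1\le i\le k-1$ and $2k\le j\le 3k-i-1$. Then $m(\mathcal{U}_k)=k+1$.
   Context: All graphs are finite, simple and undirected. A list assignment $L$ for a graph $G$ assigns to each vertex $v$ a set $L(v)$ of colors; an $L$-coloring is a proper vertex coloring $c$ of $G$ with $c(v)\in L(v)$ for every vertex $v$. A $k$-list assignment is a list assignment with $|L(v)|=k$ for all $v$. $G$ is uniquely $k$-list colorable (U$k$LC) if there exists a $k$-list assignment $L$ such that $G$ has exactly one $L$-coloring. $G$ has property $M(k)$ if it is not U$k$LC, i.e. for every $k$-list assignment $L$, $G$ has either no $L$-coloring or at least two $L$-colorings. The m-number $m(G)$ is the least integer $k\ge 1$ such that $G$ has property $M(k)$. (Every U$k$LC graph is also U$(k-1)$LC, so $G$ is U$k$LC iff $k<m(G)$.) *)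

From mathcomp Require Import all_boot.
Set Implicit Arguments. Unset Strict Implicit. Unset Printing Implicit Defensive.

(* A finite simple graph on a finType T is given by an adjacency relation
   [adj : rel T], assumed symmetric and irreflexive where relevant.
   Colors are natural numbers (any finite set of colors can be renamed). *)

Section ListColoring.
Variables (T : finType) (adj : rel T).

Definition klist_assignment (k : nat) (L : T -> seq nat) : Prop :=
  forall v, uniq (L v) /\ size (L v) = k.

Definition L_coloring (L : T -> seq nat) (c : T -> nat) : Prop :=
  (forall v, c v \in L v) /\ (forall u v, adj u v -> c u <> c v).

Definition UkLC (k : nat) : Prop :=
  exists L, klist_assignment k L /\
    exists c, L_coloring L c /\
      forall c', L_coloring L c' -> forall v, c' v = c v.

Definition property_M (k : nat) : Prop := ~ UkLC k.

Definition is_m_number (m : nat) : Prop :=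
  1 <= m /\ property_M m /\ (forall j, 1 <= j -> j < m -> ~ property_M j).

End ListColoring.

(* The graph U_k on vertices 'I_(3k-2); ordinal i stands for v_(i+1). *)
Definition U_cond (k i j : nat) : bool :=
  [|| (1 <= i <= k) && (1 <= j <= k),
      (1 <= i <= k) && (k + 1 <= j <= 2 * k - 1),
      (k + 1 <= i <= 2 * k - 1) && (2 * k <= j <= 3 * k - 2)
    | (1 <= i <= k - 1) && (2 * k <= j <= 3 * k - i - 1)].

Definition U_adj (k : nat) : rel 'I_(3 * k - 2) :=
  fun a b => (a != b) &&
    (U_cond k (val a).+1 (val b).+1 || U_cond k (val b).+1 (val a).+1).
Arguments U_adj k : clear implicits.

(* Number the vertices 0..3k-3 and split them into the clique A = [0,k),
   B = [k,2k-1) and C = [2k-1,3k-2).  The lists [0,k) on A, {v} + [0,k-1) on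
   v in B and {3k-2-v} + [k,2k-1) on v in C admit a unique coloring: the clique
   A uses all of [0,k), which forces the colors of B, which force those of C,
   and C forbids every color above v at v in A.  Since unique list
   colorability passes to shorter lists, m(U_k) > k.
   Conversely U_k has (k-1)(3k-1) < k(3k-2) edges, and a graph with fewer than
   (M-1)|V| edges is never uniquely M-list colorable: by the coefficient formula
   of the Combinatorial Nullstellensatz, the sum over all choices from the lists
   of the graph polynomial divided by the nodal weights vanishes, because every
   monomial of the graph polynomial has degree below M-1 in some variable; a
   unique coloring would leave a single nonzero term in that sum. *)

From mathcomp Require Import all_boot all_algebra zify.
Set Implicit Arguments. Unset Strict Implicit. Unset Printing Implicit Defensive.
Import GRing.Theory Num.Theory.

Lemma UkLC_le (T : finType) (adj : rel T) k j :
  1 <= j <= k -> UkLC adj k -> UkLC adj j.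
Proof.
move=> /andP [j_gt0 jk] [L [L_k [c [[cL c_proper] c_unique]]]].
pose L' v := c v :: take j.-1 [seq x <- L v | x != c v].
have size_others v : size [seq x <- L v | x != c v] = k.-1.
  have [L_uniq size_L] := L_k v.
  have := count_predC (pred1 (c v)) (L v).
  by rewrite size_filter size_L count_uniq_mem ?cL // => <-.
exists L'; split.
  move=> v; rewrite /= size_take size_others; split; last by case: ifP; lia.
  rewrite (take_uniq _ (filter_uniq _ (proj1 (L_k v)))) andbT.
  by apply/negP => /mem_take; rewrite mem_filter eqxx.
exists c; split; first by split=> // v; rewrite inE eqxx.
move=> c' [c'L' c'_proper]; apply: c_unique; split=> // v.
have := c'L' v; rewrite inE => /orP [/eqP -> //|/mem_take].
by rewrite mem_filter => /andP [].
Qed.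

Local Open Scope ring_scope.

Lemma sum_lagrange_pow_eq0 (F : fieldType) (M a : nat) (x : nat -> F) :
  injective x -> (a.+1 < M)%N ->
  \sum_(j < M) x j ^+ a / \prod_(l < M | l != j) (x j - x l) = 0.
Proof.
move=> x_inj aM; have M_gt0 : (0 < M)%N by case: M aM.
(* Compare the coefficients of X^(M-1) in the Lagrange interpolation of X^a. *)
have := congr1 (fun p : {poly F} => p`_M.-1)
  (lagrange_gen M_gt0 x_inj (_ : size 'X^a <= M)%N).
rewrite size_polyXn coefXn coef_sum => /(_ (ltnW aM)).
rewrite (negbTE (_ : M.-1 != a)); last by lia.
rewrite mulr0n => sum_eq0; apply: etrans (esym sum_eq0); apply: eq_bigr => j _.
rewrite lagrangeE // hornerXn /= !coefCM horner_prod.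
set p := \prod_(l < M | l != j) ('X - _).
have size_p : size p = M.
  rewrite /p -big_filter size_prod_XsubC; have [e _ _ [_ ->]] := big_enumP.
  by rewrite cardC1 card_ord prednK.
have := lead_coef_prod_XsubC (index_enum 'I_M) (fun l => l != j) x.
rewrite lead_coefE -/p size_p => ->; rewrite mulr1.
by under [in RHS]eq_bigr do rewrite hornerXsubC.
Qed.

Lemma sum_card_fibers (I J : finType) (phi : I -> J) :
  (\sum_j #|[pred i | phi i == j]| = #|I|)%N.
Proof.
rewrite -sum1_card (partition_big phi xpredT) //=; apply: eq_bigr => j _.
by rewrite -sum1_card.
Qed.

Lemma prod_comp_card_fibers (R : comNzRingType) (I J : finType) (phi : I -> J)
    (G : J -> R) :
  \prod_i G (phi i) = \prod_j G j ^+ #|[pred i | phi i == j]|.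
Proof.
rewrite (partition_big phi xpredT) //; apply: eq_bigr => j _.
by rewrite -prodr_const; apply: eq_big => i //= /eqP ->.
Qed.

Section FewEdges.
Variables (n M : nat) (adj : rel 'I_n) (L : 'I_n -> seq nat).
Hypothesis L_M : klist_assignment M L.

Definition is_edge (p : 'I_n * 'I_n) : bool :=
  (p.1 < p.2)%N && (adj p.1 p.2 || adj p.2 p.1).

Local Notation edge := {p | is_edge p}.

(* The colors of [L v] as interpolation nodes, extended injectively by
   negative numbers beyond the list. *)
Definition node v (j : nat) : rat :=
  if (j < M)%N then (nth 0 (L v) j)%:R else - j.+1%:R.

Definition color_of (g : {ffun 'I_n -> 'I_M}) v : nat := nth 0%N (L v) (g v).

Definition weight (g : {ffun 'I_n -> 'I_M}) : rat :=
  \prod_v (\prod_(l < M | l != g v) (node v (g v) - node v l))^-1.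

Definition edge_prod (g : {ffun 'I_n -> 'I_M}) : rat :=
  \prod_(e : edge) (node (val e).1 (g (val e).1) - node (val e).2 (g (val e).2)).

Lemma node_inj v : injective (node v).
Proof.
have [L_uniq size_L] := L_M v.
move=> i j; rewrite /node; case: ltnP => iM; case: ltnP => jM.
- by move/eqP; rewrite eqr_nat nth_uniq ?size_L // => /eqP.
- move/eqP; rewrite -subr_eq0 opprK -natrD pnatr_eq0; lia.
- move/eqP; rewrite eq_sym -subr_eq0 opprK -natrD pnatr_eq0; lia.
- by move/oppr_inj/eqP; rewrite eqr_nat eqSS => /eqP.
Qed.

Lemma node_color (g : {ffun 'I_n -> 'I_M}) v : node v (g v) = (color_of g v)%:R.
Proof. by rewrite /node ltn_ord. Qed.

Lemma weight_neq0 g : weight g != 0.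
Proof.
apply/prodf_neq0 => v _; rewrite invr_eq0; apply/prodf_neq0 => l lv.
by rewrite subr_eq0 (inj_eq (@node_inj v)) eq_sym.
Qed.

Lemma sum_weight_monomial_eq0 (a : 'I_n -> nat) v0 : ((a v0).+1 < M)%N ->
  \sum_g weight g * \prod_v node v (g v) ^+ a v = 0.
Proof.
move=> a_v0; have -> : \sum_g weight g * \prod_v node v (g v) ^+ a v =
    \prod_v \sum_(j < M) node v j ^+ a v / \prod_(l < M | l != j) (node v j - node v l).
  rewrite bigA_distr_bigA; apply: eq_bigr => g _.
  by rewrite -big_split; apply: eq_bigr => v _; rewrite mulrC.
by rewrite (bigD1 v0) //= (sum_lagrange_pow_eq0 (@node_inj v0)) ?mul0r.
Qed.

Definition chosen_end (h : {ffun edge -> bool}) (e : edge) : 'I_n :=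
  if h e then (val e).1 else (val e).2.

Lemma edge_prod_expand g : edge_prod g = \sum_(h : {ffun edge -> bool})
  \prod_(e : edge) (if h e then 1 else -1) *
  \prod_v node v (g v) ^+ #|[pred e | chosen_end h e == v]|.
Proof.
rewrite /edge_prod (eq_bigr (fun e => \sum_(b : bool)
  if b then node (val e).1 (g (val e).1) else - node (val e).2 (g (val e).2))).
  rewrite bigA_distr_bigA; apply: eq_bigr => h _.
  rewrite -(prod_comp_card_fibers (chosen_end h) (fun v => node v (g v))).
  rewrite -big_split; apply: eq_bigr => e _.
  by rewrite /chosen_end /=; case: (h e); rewrite ?mul1r ?mulN1r.
by move=> e _; rewrite big_bool.
Qed.

Lemma sum_weight_edge_prod_eq0 : (#|{: edge}| < M.-1 * n)%N ->
  \sum_g weight g * edge_prod g = 0.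
Proof.
move=> few_edges.
under eq_bigr do rewrite edge_prod_expand mulr_sumr.
rewrite exchange_big big1 //= => h _.
pose deg v := #|[pred e | chosen_end h e == v]|.
have [v0 deg_v0] : exists v0, ((deg v0).+1 < M)%N.
  case: (pickP (fun v => (deg v).+1 < M)%N) => [v0 ? | deg_ge]; first by exists v0.
  suff : (M.-1 * n <= \sum_v deg v)%N by rewrite sum_card_fibers leqNgt few_edges.
  rewrite -[X in (_ * X)%N]card_ord mulnC -sum_nat_const; apply: leq_sum => v _.
  by have := deg_ge v; lia.
under eq_bigr do rewrite mulrCA.
by rewrite -mulr_sumr (sum_weight_monomial_eq0 deg_v0) mulr0.
Qed.

Lemma color_of_inj g g' : color_of g =1 color_of g' -> g = g'.
Proof.
move=> eq_gg'; apply/ffunP => v; apply/val_inj/eqP.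
have [L_uniq size_L] := L_M v.
by rewrite -(nth_uniq 0%N _ _ L_uniq) ?size_L ?ltn_ord //; apply/eqP/eq_gg'.
Qed.

Lemma color_of_L_coloring g :
  (forall u v, adj u v -> color_of g u <> color_of g v) ->
  L_coloring adj L (color_of g).
Proof.
split=> // v; rewrite mem_nth // (proj2 (L_M v)); exact: ltn_ord.
Qed.

Lemma edge_prod_neq0P g : irreflexive adj ->
  edge_prod g != 0 <-> (forall u v, adj u v -> color_of g u <> color_of g v).
Proof.
move=> adj_irr; split.
- move=> /prodf_neq0 edge_neq0 u v uv eq_uv.
  have [u_lt_v | v_lt_u | u_eq_v] := ltngtP u v.
  + have e_uv : is_edge (u, v) by rewrite /is_edge /= u_lt_v uv.
    by have := edge_neq0 (exist _ (u, v) e_uv) isT; rewrite /= !node_color eq_uv subrr eqxx.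
  + have e_vu : is_edge (v, u) by rewrite /is_edge /= v_lt_u uv orbT.
    by have := edge_neq0 (exist _ (v, u) e_vu) isT; rewrite /= !node_color eq_uv subrr eqxx.
  + by move: uv; rewrite (val_inj u_eq_v) adj_irr.
- move=> g_proper; apply/prodf_neq0 => -[[u v] e_uv] _.
  have /andP [_ uv] := e_uv; rewrite /= !node_color subr_eq0 eqr_nat; apply/eqP.
  by case/orP: uv => [uv | vu]; [apply: g_proper | apply/nesym/g_proper].
Qed.
End FewEdges.

Lemma few_edges_not_UkLC n (adj : rel 'I_n) M :
  (#|{: {p | is_edge adj p}}| < M.-1 * n)%N -> ~ UkLC adj M.
Proof.
move=> few_edges [L [L_M [c [[cL c_proper] c_unique]]]].
have adj_irr : irreflexive adj by move=> v; apply/negP => /c_proper.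
have index_c v : (index (c v) (L v) < M)%N by rewrite -(proj2 (L_M v)) index_mem.
pose g0 : {ffun 'I_n -> 'I_M} := [ffun v => Ordinal (index_c v)].
have color_g0 : color_of L g0 =1 c by move=> v; rewrite /color_of ffunE nth_index.
have g0_proper u v : adj u v -> color_of L g0 u <> color_of L g0 v.
  by rewrite !color_g0; apply: c_proper.
have only_g0 g : g != g0 -> weight L g * edge_prod adj L g = 0.
  apply: contraNeq; rewrite mulf_eq0 negb_or => /andP [_].
  move=> /(edge_prod_neq0P _ _ adj_irr) /(color_of_L_coloring L_M) /c_unique c_g.
  by apply/eqP/(color_of_inj L_M) => v; rewrite c_g color_g0.
have := sum_weight_edge_prod_eq0 L_M few_edges.
rewrite (bigD1 g0) //= big1 ?addr0 => [|g /only_g0 //].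
apply/eqP; rewrite mulf_neq0 ?weight_neq0 //.
by apply/(edge_prod_neq0P _ _ adj_irr).
Qed.

Local Close Scope ring_scope.

Lemma sum_ord_range n lo hi : \sum_(j < n) (lo <= j < hi) = minn n hi - lo.
Proof.
elim: n => [|n IH]; first by rewrite big_ord0; lia.
by rewrite big_ord_recr /= IH; case: (boolP (lo <= n < hi)) => /=; lia.
Qed.

Lemma double_sum_ord_subS n c : c <= n -> 2 * \sum_(i < n) (c - i.+1) = c * c.-1.
Proof.
elim: c => [|c IH] c_n; first by rewrite big1.
have -> : \sum_(i < n) (c.+1 - i.+1) = \sum_(i < n) (c - i.+1) + \sum_(i < n) (0 <= i < c).
  by rewrite -big_split; apply: eq_bigr => i _ /=; case: ltnP; lia.
rewrite mulnDr IH ?sum_ord_range; nia.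
Qed.

Lemma sum_ord_and_range n (b : bool) lo hi :
  \sum_(j < n) (b && (lo <= j < hi)) = b * (minn n hi - lo).
Proof. by case: b; rewrite ?mul1n ?mul0n ?sum_ord_range // big1. Qed.

Section Uk.
Variable k : nat.
Local Notation n := (3 * k - 2).

Lemma U_adjE (u v : 'I_n) : U_adj k u v =
  ((u : nat) != v) && (U_cond k u.+1 v.+1 || U_cond k v.+1 u.+1).
Proof. by []. Qed.

Lemma U_adj_AA (u v : 'I_n) : u < k -> v < k -> (u : nat) != v -> U_adj k u v.
Proof. rewrite U_adjE /U_cond; lia. Qed.

Lemma U_adj_AB (u v : 'I_n) : u < k -> k <= v < 2 * k - 1 -> U_adj k u v.
Proof. rewrite U_adjE /U_cond; lia. Qed.

Lemma U_adj_BC (u v : 'I_n) : k <= u < 2 * k - 1 -> 2 * k - 1 <= v -> U_adj k u v.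
Proof.
move=> B_u C_v; have := ltn_ord v; rewrite U_adjE => v_n; apply/andP; split; first by lia.
by apply/orP; left; apply/or4P; constructor 3; lia.
Qed.

Lemma U_adj_CA (u v : 'I_n) : 2 * k - 1 <= u -> v < n - u -> U_adj k u v.
Proof.
move=> C_u A_v; have := ltn_ord u; rewrite U_adjE => u_n; apply/andP; split; first by lia.
by apply/orP; right; apply/or4P; constructor 4; lia.
Qed.

Definition U_list (v : 'I_n) : seq nat :=
  if v < k then iota 0 k
  else if v < 2 * k - 1 then (v : nat) :: iota 0 (k - 1)
  else (n - v) :: iota k (k - 1).

Definition U_color (v : 'I_n) : nat := if v < 2 * k - 1 then (v : nat) else n - v.

Lemma U_list_klist : 1 <= k -> klist_assignment k U_list.
Proof.
move=> k_gt0 v; rewrite /U_list; have := ltn_ord v.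
case: ifP => [_ _|A_v]; first by rewrite iota_uniq size_iota.
by case: ifP => B_v v_n /=; rewrite iota_uniq size_iota mem_iota andbT; split; lia.
Qed.

Lemma U_color_L_coloring : L_coloring (U_adj k) U_list U_color.
Proof.
split=> [v | u v]; rewrite /U_list /U_color.
  case: (ltnP v k) => [A_v | notA_v]; last by case: ifP; rewrite inE eqxx.
  have -> : v < 2 * k - 1 by lia.
  by rewrite mem_iota.
have := ltn_ord u; have := ltn_ord v; rewrite U_adjE /U_cond.
by case: ifP; case: ifP; lia.
Qed.

Section UniqueColoring.
Variable c : 'I_n -> nat.
Hypothesis c_in : forall v, c v \in U_list v.
Hypothesis c_proper : forall u v, U_adj k u v -> c u <> c v.

Lemma U_coloring_A (v : 'I_n) : v < k -> c v < k.
Proof. by move=> A_v; have := c_in v; rewrite /U_list A_v mem_iota. Qed.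

(* An injective map of the clique A into its common list [0, k) is onto. *)
Lemma U_coloring_A_onto y : y < k -> exists2 v : 'I_n, v < k & c v = y.
Proof.
move=> y_k; have k_n : k <= n by lia.
pose w := widen_ord k_n.
pose f (i : 'I_k) : 'I_k := Ordinal (@U_coloring_A (w i) (ltn_ord i)).
have f_inj : injective f.
  move=> i j /(congr1 val) /= eq_ij; apply/val_inj/eqP/negP => /negP i_neq_j.
  exact: c_proper (@U_adj_AA (w i) (w j) (ltn_ord i) (ltn_ord j) i_neq_j) eq_ij.
have /codomP [i /(congr1 val) /= ->] := inj_card_onto f_inj (leqnn _) (Ordinal y_k).
by exists (w i) => //=; apply: ltn_ord.
Qed.

Lemma U_coloring_B (v : 'I_n) : k <= v < 2 * k - 1 -> c v = v.
Proof.
move=> B_v; have := c_in v; rewrite /U_list.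
have -> : (v < k) = false by lia.
have -> : v < 2 * k - 1 by lia.
rewrite inE mem_iota => /orP [/eqP // | cv_k].
have [u A_u cu_cv] : exists2 u : 'I_n, u < k & c u = c v.
  by apply: U_coloring_A_onto; lia.
by case: (c_proper (U_adj_AB A_u B_v) cu_cv).
Qed.

Lemma U_coloring_C (v : 'I_n) : 2 * k - 1 <= v -> c v = n - v.
Proof.
move=> C_v; have := c_in v; rewrite /U_list.
have -> : (v < k) = false by lia.
have -> : (v < 2 * k - 1) = false by lia.
rewrite inE mem_iota => /orP [/eqP // | B_cv].
have cv_n : c v < n by lia.
have B_u : k <= Ordinal cv_n < 2 * k - 1 by rewrite /=; lia.
by case: (c_proper (U_adj_BC B_u C_v) (U_coloring_B B_u)).
Qed.

(* The C-vertex [u = n - c v] has color [c v] and is adjacent to [v] iff [v < c v]. *)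
Lemma U_coloring_A_le (v : 'I_n) : v < k -> c v <= v.
Proof.
move=> A_v; rewrite leqNgt; apply/negP => v_lt_cv.
have cv_k := U_coloring_A A_v.
have u_n : n - c v < n by lia.
have C_u : 2 * k - 1 <= Ordinal u_n by rewrite /=; lia.
have uv : U_adj k (Ordinal u_n) v by apply: U_adj_CA => //=; lia.
by apply: (c_proper uv); rewrite (U_coloring_C C_u) /=; lia.
Qed.

Lemma U_coloring_A_id (v : 'I_n) : v < k -> c v = v.
Proof.
have [m] := ubnP v; elim: m v => // m IH v v_m A_v.
have := U_coloring_A_le A_v; rewrite leq_eqVlt => /orP [/eqP // | cv_lt_v].
have cv_n : c v < n by lia.
have u_id : c (Ordinal cv_n) = c v by apply: IH => /=; lia.
have uv : U_adj k (Ordinal cv_n) v by apply: U_adj_AA => /=; lia.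
by case: (c_proper uv u_id).
Qed.

Lemma U_coloring_unique v : c v = U_color v.
Proof.
rewrite /U_color; have [A_v | notA_v] := ltnP v k.
  by rewrite U_coloring_A_id //; have -> : v < 2 * k - 1 by lia.
case: ifP => B_v; first by apply: U_coloring_B; lia.
by apply: U_coloring_C; lia.
Qed.
End UniqueColoring.

Lemma U_UkLC : 2 <= k -> UkLC (U_adj k) k.
Proof.
move=> k_ge2; exists U_list; split; first by apply: U_list_klist; lia.
exists U_color; split; first exact: U_color_L_coloring.
by move=> c [c_in c_proper] v; apply: U_coloring_unique.
Qed.

Definition U_edge_bound (i j : nat) : nat :=
  (i < j < k) + ((i < k) && (k <= j < 2 * k - 1)) +
  ((k <= i < 2 * k - 1) && (2 * k - 1 <= j < n)) +
  ((i < k - 1) && (2 * k - 1 <= j < n - i)).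

Lemma U_cond_region (i j : nat) : i < j -> j < n ->
  U_cond k i.+1 j.+1 || U_cond k j.+1 i.+1 ->
  [|| j < k, (i < k) && (k <= j < 2 * k - 1), (k <= i < 2 * k - 1) && (2 * k - 1 <= j)
    | (i < k - 1) && (2 * k - 1 <= j < n - i)].
Proof.
move=> ij j_n; rewrite /U_cond.
by case/orP => /or4P [] /andP [/andP [? ?] /andP [? ?]]; apply/or4P;
  first [constructor 1; lia | constructor 2; lia | constructor 3; lia
        | constructor 4; lia | lia].
Qed.

Lemma is_edge_U_le (p : 'I_n * 'I_n) : is_edge (U_adj k) p <= U_edge_bound p.1 p.2.
Proof.
case: p => u v; rewrite /is_edge /=.
case: (boolP (u < v)) => //= uv; case: (boolP (_ || _)) => //= adj_uv.
have := U_cond_region uv (ltn_ord v).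
have -> : U_cond k u.+1 v.+1 || U_cond k v.+1 u.+1.
  by case/orP: adj_uv; rewrite !U_adjE => /andP [_] //; rewrite orbC.
have := ltn_ord v.
by rewrite /U_edge_bound => v_n /(_ isT); case/or4P; lia.
Qed.

Lemma sum_U_edge_bound (i : nat) :
  \sum_(j < n) U_edge_bound i j <=
  2 * (k - i.+1) + (i < k) * (k - 1) + (k <= i < 2 * k - 1) * (k - 1).
Proof.
rewrite /U_edge_bound !big_split /= !sum_ord_and_range sum_ord_range.
case: (boolP (i < k)) => ?; case: (boolP (i < k - 1)) => ?;
  case: (boolP (k <= i < 2 * k - 1)) => ?; rewrite /= ?mul1n ?mul0n; lia.
Qed.

Lemma card_U_edges : 2 <= k -> #|{: {p | is_edge (U_adj k) p}}| < k * n.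
Proof.
move=> k_ge2; rewrite card_sig -sum1_card big_mkcond /=.
apply: (@leq_ltn_trans (\sum_(p : 'I_n * 'I_n) U_edge_bound p.1 p.2)).
  by apply: leq_sum => p _; rewrite inE; apply: is_edge_U_le.
rewrite -(pair_bigA _ (fun i j : 'I_n => U_edge_bound i j)) /=.
apply: (@leq_ltn_trans (\sum_(i < n)
    (2 * (k - i.+1) + (0 <= i < k) * (k - 1) + (k <= i < 2 * k - 1) * (k - 1)))).
  by apply: leq_sum => i _; apply: sum_U_edge_bound.
have sum_tri : 2 * \sum_(i < n) (k - i.+1) = k * (k - 1).
  by rewrite double_sum_ord_subS ?subn1 //; lia.
have bound_lt : k * (k - 1) + k * (k - 1) + (k - 1) * (k - 1) < k * n.
  by case: k k_ge2 {sum_tri} => // K _; rewrite subn1 /= ?mulSn ?mulnS; nia.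
rewrite !big_split -!big_distrl /= big1_eq !sum_ord_range.
have -> : \sum_(i < n) (i < k) = k by have := sum_ord_range n 0 k => /=; lia.
have -> : minn n (2 * k - 1) - k = k - 1 by lia.
by rewrite addn0 addnn -mul2n sum_tri.
Qed.
End Uk.

Theorem mainTheorem18 (k : nat) (hk : 2 <= k) :
  is_m_number (U_adj k) (k + 1).
Proof.
split; first by rewrite addn1.
split; first by apply: few_edges_not_UkLC; rewrite addn1 /=; apply: card_U_edges.
by move=> j j_gt0 j_le_k; apply; apply: (UkLC_le _ (U_UkLC hk)); lia.
Qed.
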